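(* Let $a,r$ be positive integers and let $h:\mathbb Z\to\mathbb Z_{\ge0}$ be given by $h(j)=a r^j$ for $j\ge 0$ and $h(j)=0$ for $j<0$. Then $\operatorname{hdepth}(h)=r$.
   Context: For a nonzero function $h:\mathbb Z\to\mathbb Z_{\ge 0}$ with $h(j)=0$ for all sufficiently negative $j$, and integers $k\le d$, set $\beta_k^d(h)=\sum_{j\le k}(-1)^{k-j}\binom{d-j}{k-j}h(j)$, and $\operatorname{hdepth}(h)=\max\{d\in\mathbb Z:\ \beta_k^d(h)\ge 0\text{ for all integers }k\le d\}$. *)

From mathcomp Require Import all_boot all_order all_algebra.
Set Implicit Arguments. Unset Strict Implicit. Unset Printing Implicit Defensive.
Import Order.TTheory GRing.Theory Num.Theory.
Local Open Scope ring_scope.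

(* beta_k^d(h) = sum_{j <= k} (-1)^(k-j) C(d-j, k-j) h(j), for k <= d.
   The sum over j <= k is made finite using a lower bound L such that
   h(j) = 0 for all j < L: it is the sum over L <= j <= k
   (empty if k < L).  For j <= k <= d, d - j >= k - j >= 0, so the
   binomial is an ordinary natural binomial coefficient. *)
Definition beta (h : int -> nat) (L k d : int) : int :=
  \sum_(i < absz (Num.max 0%R (k - L + 1)%R))
     (let j := L + (i : nat)%:Z in
      (-1) ^+ absz (k - j) * ('C(absz (d - j), absz (k - j)))%:Z * (h j)%:Z).

Definition hdepth_good (h : int -> nat) (L d : int) : Prop :=
  forall k : int, k <= d -> 0 <= beta h L k d.

Definition is_hdepth (h : int -> nat) (L D : int) : Prop :=
  hdepth_good h L D /\ (forall d : int, hdepth_good h L d -> d <= D).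

From mathcomp Require Import all_boot all_order all_algebra.
From mathcomp Require Import zify ring.
Set Implicit Arguments. Unset Strict Implicit. Unset Printing Implicit Defensive.
Import Order.TTheory GRing.Theory Num.Theory.
Local Open Scope ring_scope.

(* For h(j) = a r^j (j >= 0), beta_k^d(h) = a * G(k), where
     G(k) = sum_{i <= k} (-1)^(k-i) C(d-i, k-i) r^i      (geom_beta r d k).
   Pascal's rule gives the recurrence G(k+1) = (r+1) G(k) + (-1)^(k+1) C(d+1, k+1),
   with G(0) = 1.  When d <= r the alternating correction never wins:
   by induction on k, G(k) >= 0 and, for k even, C(d+1, k+1) <= (r+1) G(k)
   (using C(n, k+1) <= n C(n, k) with n = d+1 <= r+1).  Hence hdepth(h) >= r.  Conversely
   G(1) = r - d, so beta_1^d(h) = a (r - d) < 0 as soon as d > r, whence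
   hdepth(h) <= r. *)

Definition geom_beta (r d k : nat) : int :=
  \sum_(i < k.+1) (-1) ^+ (k - i) * ('C(d - i, k - i))%:Z * (r ^ i)%:Z.

Lemma geom_beta0 r d : geom_beta r d 0 = 1.
Proof. by rewrite /geom_beta big_ord1 /= bin0 expr0 !mul1r. Qed.

Lemma geom_beta1 r d : geom_beta r d 1 = r%:Z - d%:Z.
Proof.
rewrite /geom_beta big_ord_recr big_ord1 /= !subn0 bin1 bin0 expn0 expn1.
by rewrite expr1 expr0; ring.
Qed.

Lemma geom_beta_peel r d k : geom_beta r d k =
  (-1) ^+ k * ('C(d, k))%:Z +
  \sum_(i < k) (-1) ^+ (k - i.+1) * ('C(d - i.+1, k - i.+1))%:Z * (r ^ i.+1)%:Z.
Proof. by rewrite /geom_beta big_ord_recl /= !subn0 expn0 mulr1. Qed.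

(* Pascal's rule C(d-i, k-i) = C(d-i-1, k-i) + C(d-i-1, k-i-1), summed with the
   weights of geom_beta: lowering the top index of every binomial in r * G(k)
   produces the tail of G(k) left by geom_beta_peel. *)
Lemma geom_beta_pascal r d k : (k <= d)%N ->
  \sum_(i < k.+1) (-1) ^+ (k - i) * ('C(d - i.+1, k - i))%:Z * (r ^ i.+1)%:Z
  - r%:Z * geom_beta r d k =
  \sum_(i < k) (-1) ^+ (k - i.+1) * ('C(d - i.+1, k - i.+1))%:Z * (r ^ i.+1)%:Z.
Proof.
move=> kd; rewrite /geom_beta mulr_sumr -sumrB big_ord_recr /= subnn !bin0.
rewrite expnS PoszM mulrCA subrr addr0; apply: eq_bigr => i _.
have ik : (i < k)%N := ltn_ord i.
have -> : (k - i = (k - i.+1).+1)%N by lia.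
have -> : (d - i = (d - i.+1).+1)%N by lia.
by rewrite binS PoszD expnS PoszM exprS; ring.
Qed.

Lemma geom_beta_rec r d k : (k <= d)%N ->
  geom_beta r d k.+1 =
  (r.+1)%:Z * geom_beta r d k + (-1) ^+ k.+1 * ('C(d.+1, k.+1))%:Z.
Proof.
move=> kd; have shift := geom_beta_pascal r kd.
have tail := geom_beta_peel r d k.
rewrite geom_beta_peel; under eq_bigr do rewrite subSS.
rewrite binS PoszD intS.
set S := \sum_(i < k.+1) _ in shift *; set T := \sum_(i < k) _ in shift tail *.
have -> : S = r%:Z * geom_beta r d k + T by rewrite -shift; ring.
rewrite tail exprS; ring.
Qed.

(* C(n, k+1) <= n C(n, k): from (k+1) C(n, k+1) = (n-k) C(n, k). *)
Lemma bin_succ_le n k : ('C(n, k.+1) <= n * 'C(n, k))%N.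
Proof.
have := mul_bin_left n k; have : (n - k <= n)%N := leq_subr k n.
nia.
Qed.

Section GeomBetaNonneg.

Variables r d : nat.
Hypothesis d_le_r : (d <= r)%N.

(* The induction invariant: G(k) >= 0, and at even k the margin (r+1) G(k)
   absorbs the next subtracted binomial C(d+1, k+1). *)
Lemma geom_beta_invariant k : (k <= d)%N ->
  0 <= geom_beta r d k /\
  (~~ odd k -> ('C(d.+1, k.+1))%:Z <= (r.+1)%:Z * geom_beta r d k).
Proof.
elim: k => [|k IH] kd; first by rewrite geom_beta0 mulr1 bin1 lez_nat.
have [G_ge0 G_margin] := IH (ltnW kd).
rewrite geom_beta_rec ?(ltnW kd) // -signr_odd /=.
case: (boolP (odd k)) => [_ | k_even] /=; rewrite ?expr0 ?expr1 ?mulN1r ?mul1r.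
- have G1_ge0 : 0 <= (r.+1)%:Z * geom_beta r d k + ('C(d.+1, k.+1))%:Z.
    by rewrite addr_ge0 ?mulr_ge0.
  split=> // _; apply: le_trans (_ : (r.+1)%:Z * ('C(d.+1, k.+1))%:Z <= _).
    by rewrite -PoszM lez_nat (leq_trans (bin_succ_le _ _)) // leq_mul2r ltnS d_le_r orbT.
  by rewrite ler_pM2l // lerDr mulr_ge0.
- by split; rewrite ?k_even // subr_ge0 G_margin.
Qed.

Lemma geom_beta_ge0 k : (k <= d)%N -> 0 <= geom_beta r d k.
Proof. by move=> kd; case: (geom_beta_invariant kd). Qed.

End GeomBetaNonneg.

Lemma beta_nat h (k d : nat) : (k <= d)%N ->
  beta h 0 k d =
  \sum_(i < k.+1) (-1) ^+ (k - i) * ('C(d - i, k - i))%:Z * (h i)%:Z.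
Proof.
move=> kd; rewrite /beta subr0 [k%:Z + 1]addrC -intS max_r ?lez_nat //.
apply: eq_bigr => i _ /=.
have ik : (i <= k)%N := ltn_ord i.
by rewrite add0r !subzn // (leq_trans ik kd).
Qed.

Lemma beta_below h (L k d : int) : k < L -> beta h L k d = 0.
Proof.
by move=> kL; rewrite /beta max_l ?big_ord0 //; lia.
Qed.

Definition geom_h (a r : nat) (j : int) : nat :=
  if 0 <= j then (a * r ^ absz j)%N else 0%N.

Lemma beta_geom a r (k d : nat) : (k <= d)%N ->
  beta (geom_h a r) 0 k d = a%:Z * geom_beta r d k.
Proof.
move=> kd; rewrite beta_nat // /geom_beta mulr_sumr; apply: eq_bigr => i _.
by rewrite /geom_h /= PoszM; ring.
Qed.

Lemma geom_hdepth_good (a r d : nat) : (d <= r)%N -> hdepth_good (geom_h a r) 0 d.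
Proof.
move=> dr [k|k] kd; last by rewrite beta_below.
by rewrite beta_geom -?lez_nat // mulr_ge0 ?geom_beta_ge0.
Qed.

Lemma geom_hdepth_bad (a r : nat) (d : int) : (0 < a)%N -> r%:Z < d ->
  ~ hdepth_good (geom_h a r) 0 d.
Proof.
case: d => [d|//] a_gt0; rewrite ltz_nat => rd good.
have := good 1; rewrite beta_geom ?geom_beta1 ?lez_nat ?(leq_ltn_trans _ rd) //.
by rewrite pmulr_rge0 ?ltz_nat // subr_ge0 lez_nat leqNgt rd => /(_ isT).
Qed.

Theorem corollary1p9 (a r : nat) (ha : (0 < a)%N) (hr : (0 < r)%N) :
  is_hdepth (fun j : int => if 0 <= j then (a * r ^ absz j)%N else 0%N) 0 r%:Z.
Proof.
split; first exact: geom_hdepth_good.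
move=> d good; rewrite leNgt; apply/negP => rd.
exact: geom_hdepth_bad ha rd good.
Qed.
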